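(* We have \begin{align*} \sum_{\substack{\alpha\in \mathrm{Par}(R,r),\ \beta\in \mathrm{Par}(S,s)\\ \lambda\in \mathrm{Par}(n-R,c),\ \mu\in \mathrm{Par}(m-S,c)}} \mathrm{Kre}_q(n,m;c,r,s,R,S;\alpha,\beta,\lambda,\mu) &= \mathrm{Nara}_{1}(n,m;c,r,s,R,S),\\ \sum_{R,S\ge0} \mathrm{Nara}_{1}(n,m;c,r,s,R,S) &= \mathrm{Nara}_{2}(n,m;c,r,s),\\ \sum_{r,s\ge0} \mathrm{Nara}_{2}(n,m;c,r,s) &= \mathrm{Nara}_{3}(n,m;c),\\ \sum_{c\ge0} \mathrm{Nara}_{3}(n,m;c) &= \mathrm{Cat}_q(n,m). \end{align*}
   Context: Notation: $[n]_q=\frac{1-q^n}{1-q}$, $[n]_q!=[1]_q\cdots[n]_q$, $\genfrac{[}{]}{0pt}{}{n}{k}_q=\frac{[n]_q!}{[k]_q![n-k]_q!}$. $\mathrm{Par}(n,k)$ is the set of integer partitions of $n$ with $k$ parts; for $\lambda=(1^{m_1},2^{m_2},\dots)$ with $k$ parts, $\genfrac{[}{]}{0pt}{}{k}{\lambda}_q=\frac{[k]_q!}{[m_1]_q![m_2]_q!\cdots}$, and $\tau(\lambda)=\sum_{i\ge1}\lambda'_i\lambda'_{i+1}$ where $\lambda'$ is the conjugate partition. For integers $n,m,c,r,s,R,S\ge0$ and $\alpha\in\mathrm{Par}(R,r)$, $\beta\in\mathrm{Par}(S,s)$, $\lambda\in\mathrm{Par}(n-R,c)$, $\mu\in\mathrm{Par}(m-S,c)$,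 set $X=c(c-1)$, $Y=r(c+r)+s(c+s)$, $Z=r(n-c-R)+s(m-c-S)$, $W=r(R-r)+s(S-s)+c(n-R-c)+c(m-S-c)-\tau(\alpha)-\tau(\beta)-\tau(\lambda)-\tau(\mu)$. Define \[\mathrm{Kre}_q(n,m;c,r,s,R,S;\alpha,\beta,\lambda,\mu)=q^{X+Y+Z+W}\frac{[nm]_q}{[n]_q[m]_q}\frac{[2c]_q}{2}\frac{[n-R]_q[m-S]_q}{[c]_q^2}\genfrac{[}{]}{0pt}{}{n}{r}_q\genfrac{[}{]}{0pt}{}{m}{s}_q\genfrac{[}{]}{0pt}{}{r}{\alpha}_q\genfrac{[}{]}{0pt}{}{s}{\beta}_q\genfrac{[}{]}{0pt}{}{c}{\lambda}_q\genfrac{[}{]}{0pt}{}{c}{\mu}_q,\] \[\mathrm{Nara}_{1}(n,m;c,r,s,R,S)=q^{X+Y+Z}\frac{[nm]_q}{[n]_q[m]_q}\frac{[2c]_q}{2}\genfrac{[}{]}{0pt}{}{n}{r}_q\genfrac{[}{]}{0pt}{}{m}{s}_q\genfrac{[}{]}{0pt}{}{R-1}{r-1}_q\genfrac{[}{]}{0pt}{}{S-1}{s-1}_q\genfrac{[}{]}{0pt}{}{n-R}{c}_q\genfrac{[}{]}{0pt}{}{m-S}{c}_q,\] \[\mathrm{Nara}_{2}(n,m;c,r,s)=q^{X+Y}\frac{[nm]_q}{[n]_q[m]_q}\frac{[2c]_q}{2}\genfrac{[}{]}{0pt}{}{n}{r}_q\genfrac{[}{]}{0pt}{}{m}{s}_q\genfrac{[}{]}{0pt}{}{n}{r+c}_q\genfrac{[}{]}{0pt}{}{m}{s+c}_q,\]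 \[\mathrm{Nara}_{3}(n,m;c)=q^{X}\frac{[nm]_q}{[n]_q[m]_q}\frac{[2c]_q}{2}\genfrac{[}{]}{0pt}{}{2n}{n-c}_q\genfrac{[}{]}{0pt}{}{2m}{m-c}_q,\qquad \mathrm{Cat}_q(n,m)=\frac{[nm]_q}{2[m+n]_q}\genfrac{[}{]}{0pt}{}{2n}{n}_q\genfrac{[}{]}{0pt}{}{2m}{m}_q.\] *)

From HB Require Import structures.
From mathcomp Require Import all_boot all_order all_algebra fraction.
Set Implicit Arguments. Unset Strict Implicit. Unset Printing Implicit Defensive.
Import Order.TTheory GRing.Theory Num.Theory.
Local Open Scope ring_scope.

Section QDefs.
Variables (F : fieldType) (q : F).

Definition qint (n : nat) : F := \sum_(i < n) q ^+ i.
Definition qfact (n : nat) : F := \prod_(i < n) qint i.+1.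
Definition qbinom (n k : nat) : F :=
  if (k <= n)%N then qfact n / (qfact k * qfact (n - k)) else 0.
Definition qbinomZ (a b : int) : F :=
  match a, b with Posz a', Posz b' => qbinom a' b' | _, _ => 0 end.

(* partitions: a weakly decreasing sequence of positive parts summing to n;
   the number of parts is the size of the sequence *)
Definition is_par (n : nat) (s : seq nat) : bool :=
  [&& sorted geq s, all (fun x => 0 < x)%N s & sumn s == n].

Definition pmult (s : seq nat) (i : nat) : nat := count_mem i s.
Definition pconj (s : seq nat) (i : nat) : nat := count (fun x => i <= x)%N s.
(* tau(lambda) = sum_{i>=1} lambda'_i lambda'_{i+1}  (lambda'_i = 0 for i > |lambda|) *)
Definition ptau (s : seq nat) : nat :=
  (\sum_(1 <= i < (sumn s).+1) pconj s i * pconj s i.+1)%N.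
Definition qmultinom (k : nat) (s : seq nat) : F :=
  qfact k / \prod_(1 <= i < (sumn s).+1) qfact (pmult s i).

Definition expX (c : nat) : int := (c * (c - 1))%N.
Definition expY (c r s : nat) : int := (r * (c + r) + s * (c + s))%N.
Definition expZ (n m c r s R S : nat) : int :=
  (r%:Z * (n%:Z - c%:Z - R%:Z) + s%:Z * (m%:Z - c%:Z - S%:Z))%R.
Definition expW (n m c r s R S : nat) (a b l mu : seq nat) : int :=
  ((r * (R - r) + s * (S - s) + c * (n - R - c) + c * (m - S - c))%N%:Z
   - (ptau a + ptau b + ptau l + ptau mu)%N%:Z)%R.

Definition Kre (n m c r s R S : nat) (a b l mu : seq nat) : F :=
  q ^ (expX c + expY c r s + expZ n m c r s R S + expW n m c r s R S a b l mu)
  * (qint (n * m) / (qint n * qint m)) * (qint (2 * c) / 2)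
  * (qint (n - R) * qint (m - S) / (qint c ^+ 2))
  * qbinom n r * qbinom m s
  * qmultinom r a * qmultinom s b * qmultinom c l * qmultinom c mu.

Definition qbinom_m1 (R r : nat) : F :=
  if (R == 0%N) && (r == 0%N) then 1 else qbinomZ (R%:Z - 1) (r%:Z - 1).

Definition Nara1 (n m c r s R S : nat) : F :=
  q ^ (expX c + expY c r s + expZ n m c r s R S)
  * (qint (n * m) / (qint n * qint m)) * (qint (2 * c) / 2)
  * qbinom n r * qbinom m s * qbinom_m1 R r * qbinom_m1 S s
  * qbinomZ (n%:Z - R%:Z) c * qbinomZ (m%:Z - S%:Z) c.

Definition Nara2 (n m c r s : nat) : F :=
  q ^ (expX c + expY c r s)
  * (qint (n * m) / (qint n * qint m)) * (qint (2 * c) / 2)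
  * qbinom n r * qbinom m s * qbinom n (r + c) * qbinom m (s + c).

Definition Nara3 (n m c : nat) : F :=
  q ^ expX c
  * (qint (n * m) / (qint n * qint m)) * (qint (2 * c) / 2)
  * qbinomZ (2 * n)%N (n%:Z - c%:Z) * qbinomZ (2 * m)%N (m%:Z - c%:Z).

Definition Catq (n m : nat) : F :=
  qint (n * m) / (2 * qint (m + n)) * qbinom (2 * n) n * qbinom (2 * m) m.

(* sum of Kre over alpha in Par(R,r), beta in Par(S,s), lambda in Par(n-R,c),
   mu in Par(m-S,c); parts of a partition of N are <= N, so they are encoded as
   tuples over 'I_N.+1 *)
Definition KreSum (n m c r s R S : nat) : F :=
  \sum_(a : r.-tuple 'I_R.+1 | is_par R (map val a))
  \sum_(b : s.-tuple 'I_S.+1 | is_par S (map val b))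
  \sum_(l : c.-tuple 'I_(n - R).+1 | is_par (n - R) (map val l))
  \sum_(mu : c.-tuple 'I_(m - S).+1 | is_par (m - S) (map val mu))
    Kre n m c r s R S (map val a) (map val b) (map val l) (map val mu).

End QDefs.

(* the generic parameter q: the indeterminate of Q(q) *)
Definition Qq := {fraction {poly rat}}.
Definition qX : Qq := tofrac (('X : {poly rat})).

From mathcomp Require Import all_boot all_order all_algebra fraction.
From mathcomp Require Import ring zify.
Set Implicit Arguments. Unset Strict Implicit. Unset Printing Implicit Defensive.
Import Order.TTheory GRing.Theory Num.Theory.

(* Each of alpha, beta, lambda, mu enters Kre through the weight
   q^(k(N-k) - tau(lambda)) [k; lambda]_q of a partition lambda of N with k parts,
   and these weights sum to [N-1 choose k-1]_q: deleting the first column of lambda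
   leaves a partition mu of N-k whose number j of parts is lambda'_2, so tau drops
   by kj, [k; lambda]_q becomes [k choose j]_q [j; mu]_q, and induction on N closes
   by q-Vandermonde.  So the sum of Kre splits into four such sums, and the
   absorption identity [N]_q [N-1 choose c-1]_q = [c]_q [N choose c]_q turns it
   into Nara1.  The sums over (R, S) and over (r, s) are q-Chu-Vandermonde
   convolutions, and the sum over c telescopes: its c-th term is proportional to
   B_c - B_(c+1), where B_c = q^(c(c-1)) [n+c]_q [m+c]_q [2n choose n-c]_q
   [2m choose m-c]_q. *)

(** * Young diagrams *)

(* Removing, resp. adding, the first column of a Young diagram. *)
Definition drop_col (s : seq nat) := [seq x.-1 | x <- s & 1 < x].
Definition add_col k (mu : seq nat) := map S mu ++ nseq (k - size mu) 1.

Section PartitionColumns.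
Implicit Types (s mu : seq nat) (N k : nat).

Let geq_trans : transitive geq := rev_trans leq_trans.

Lemma par_sorted N s : is_par N s -> sorted geq s.
Proof. by case/and3P. Qed.

Lemma par_pos N s : is_par N s -> all (fun x => 0 < x) s.
Proof. by case/and3P. Qed.

Lemma par_sumn N s : is_par N s -> sumn s = N.
Proof. by case/and3P => _ _ /eqP. Qed.

Lemma mem_leq_sumn x s : x \in s -> x <= sumn s.
Proof.
elim: s => [|y s IH] //=; rewrite inE => /predU1P [-> | /IH]; first exact: leq_addr.
by move/leq_trans; apply; apply: leq_addl.
Qed.

Lemma size_leq_sumn s : all (fun x => 0 < x) s -> size s <= sumn s.
Proof. by elim: s => [|x s IH] //= /andP [x_gt0 /IH]; rewrite -add1n; apply: leq_add. Qed.

Lemma par_size_leq N s : is_par N s -> size s <= N.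
Proof. by move=> parNs; rewrite -(par_sumn parNs) size_leq_sumn // (par_pos parNs). Qed.

Lemma sumn_drop_col s : all (fun x => 0 < x) s -> sumn (drop_col s) + size s = sumn s.
Proof.
rewrite /drop_col; elim: s => [|x s IH] //= /andP [x_gt0 /IH {}IH].
by case: (ltnP 1 x) => /= x1; lia.
Qed.

Lemma drop_col_pos s : all (fun x => 0 < x) (drop_col s).
Proof.
rewrite /drop_col; elim: s => [|x s IH] //=.
by case: ifP => //= x_gt1; rewrite IH andbT -ltnS prednK // ltnW.
Qed.

Lemma size_drop_col s : size (drop_col s) = count (fun x => 1 < x) s.
Proof. by rewrite size_map size_filter. Qed.

Lemma sorted_drop_col s : sorted geq s -> sorted geq (drop_col s).
Proof.
rewrite !(sorted_pairwise geq_trans) /drop_col pairwise_map => /(pairwise_filter (fun x => 1 < x)).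
by apply: sub_pairwise => x y /=; lia.
Qed.

Lemma add_colK k mu : all (fun x => 0 < x) mu -> drop_col (add_col k mu) = mu.
Proof.
move=> mu_pos; rewrite /drop_col /add_col filter_cat filter_nseq map_cat cats0.
by elim: mu mu_pos => [|x mu IH] //= /andP [x_gt0 /IH]; rewrite ltnS x_gt0 /= => ->.
Qed.

Lemma drop_colK N s : is_par N s -> add_col (size s) (drop_col s) = s.
Proof.
move=> /and3P [+ + _]; elim: s => [|x s IH] //= sorted_xs /andP [x_gt0 s_pos].
have sorted_s := path_sorted sorted_xs.
rewrite /drop_col /add_col /=; case: ifP => x_gt1 /=.
  by rewrite subSS prednK 1?ltnW // -[in RHS](IH sorted_s s_pos).
have s1 : s = nseq (size s) 1.
  apply/all_pred1P/allP => y ys; apply/eqP.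
  have := allP (order_path_min geq_trans sorted_xs) y ys.
  by have := allP s_pos y ys; rewrite /=; lia.
by rewrite {}s1 filter_nseq size_nseq (_ : x = 1) //; lia.
Qed.

Lemma size_add_col k mu : size mu <= k -> size (add_col k mu) = k.
Proof. by rewrite /add_col size_cat size_map size_nseq; lia. Qed.

Lemma add_col_par M k mu : is_par M mu -> size mu <= k -> is_par (M + k) (add_col k mu).
Proof.
move=> /and3P [sorted_mu mu_pos /eqP <-] le_mu_k; apply/and3P; split.
- rewrite (sorted_pairwise geq_trans) pairwise_cat pairwise_map.
  rewrite (sorted_pairwise geq_trans) in sorted_mu.
  apply/and3P; split=> //.
  + by apply/allrelP => _ _ /mapP [x _ ->] /nseqP [-> _].
  + by elim: (k - _) => //= n ->; rewrite andbT; apply/allP => _ /nseqP [-> _].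
- by rewrite all_cat all_map; apply/andP; split; apply/allP => // x /nseqP [->].
- rewrite sumn_cat sumn_nseq; apply/eqP.
  suff -> : sumn (map S mu) = sumn mu + size mu by lia.
  by elim: (mu) => [|x s IH] //=; rewrite IH addnS addnA.
Qed.

Lemma pconj1 s : all (fun x => 0 < x) s -> pconj s 1 = size s.
Proof. by move=> s_pos; apply/eqP; rewrite -all_count. Qed.

Lemma pconjS s i : 0 < i -> pconj s i.+1 = pconj (drop_col s) i.
Proof.
move=> i_gt0; rewrite /pconj /drop_col count_map count_filter.
by apply: eq_count => x /=; apply/idP/idP; lia.
Qed.

Lemma pmult1 s : all (fun x => 0 < x) s -> pmult s 1 = size s - size (drop_col s).
Proof.
rewrite size_drop_col /pmult; elim: s => [|x s IH] //= /andP [x_gt0 /IH ->].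
by have := count_size (fun x => 1 < x) s; case: (ltngtP x 1); lia.
Qed.

Lemma pmultS s i : 0 < i -> pmult s i.+1 = pmult (drop_col s) i.
Proof.
move=> i_gt0; rewrite /pmult /drop_col count_map count_filter.
by apply: eq_count => x /=; apply/idP/idP; lia.
Qed.

Lemma pconj_sumn s i : sumn s < i -> pconj s i = 0.
Proof.
move=> lt_s_i; apply/eqP; rewrite -leqn0 leqNgt -has_count.
by apply/hasP => -[x /mem_leq_sumn]; lia.
Qed.

Lemma pmult_sumn s i : sumn s < i -> pmult s i = 0.
Proof.
move=> lt_s_i; apply/eqP; rewrite -leqn0 leqNgt -has_count.
by apply/hasP => -[x /mem_leq_sumn le_x_s /eqP]; lia.
Qed.

Lemma ptau_widen s M : sumn s <= M ->
  ptau s = \sum_(1 <= i < M.+1) pconj s i * pconj s i.+1.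
Proof.
move=> le_s_M; rewrite /ptau (@big_cat_nat _ _ _ (sumn s).+1 1 M.+1) //=.
rewrite [X in _ = _ + X]big1_seq ?addn0 // => i /andP [_].
by rewrite mem_index_iota => /andP [lt_s_i _]; rewrite pconj_sumn.
Qed.

Lemma ptau_drop_col s : all (fun x => 0 < x) s -> 0 < sumn s ->
  ptau s = size s * size (drop_col s) + ptau (drop_col s).
Proof.
move=> s_pos s_gt0.
have sumn_drop := sumn_drop_col s_pos.
have size_gt0 : 0 < size s by move: s_gt0; case: (s).
rewrite (@ptau_widen (drop_col s) (sumn s).-1); last by lia.
rewrite /ptau big_ltn ?ltnS // pconj1 // pconjS // pconj1 ?drop_col_pos //.
rewrite big_add1 /= prednK //; congr (_ + _).
by apply: eq_big_nat => i /andP [i_gt0 _]; rewrite !pconjS.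
Qed.

End PartitionColumns.

Definition par_list N k : seq (seq nat) :=
  [seq s <- map (fun a : k.-tuple 'I_N.+1 => map val a) (index_enum _) | is_par N s].

Lemma par_list_uniq N k : uniq (par_list N k).
Proof.
rewrite filter_uniq // map_inj_uniq ?index_enum_uniq //.
by move=> a b /(inj_map val_inj) /val_inj.
Qed.

Lemma mem_par_list N k s : (s \in par_list N k) = is_par N s && (size s == k).
Proof.
rewrite mem_filter; apply/andP/andP => [[-> /mapP [a _ ->]] | [parNs /eqP size_s]].
  by rewrite size_map size_tuple.
split=> //; have size_s' : size (map (@inord N) s) == k by rewrite size_map size_s.
apply/mapP; exists (Tuple size_s'); first by rewrite mem_index_enum.
rewrite /= -map_comp map_id_in // => x xs /=.
by rewrite inordK // ltnS -(par_sumn parNs) mem_leq_sumn.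
Qed.

Lemma par_list0 N : perm_eq (par_list N 0) (if N == 0 then [:: [::]] else [::]).
Proof.
apply: uniq_perm; rewrite ?par_list_uniq //; first by case: (N == 0).
move=> s; rewrite mem_par_list size_eq0.
by case: N => [|N]; case: s => [|x s] //=; rewrite /is_par /= andbF.
Qed.

Lemma perm_par_list_drop_col N k j : j <= k -> k <= N ->
  perm_eq [seq s <- par_list N k | size (drop_col s) == j]
          (map (add_col k) (par_list (N - k) j)).
Proof.
move=> le_jk le_kN; apply: uniq_perm.
- by rewrite filter_uniq // par_list_uniq.
- rewrite map_inj_in_uniq ?par_list_uniq // => mu nu.
  rewrite !mem_par_list => /andP [/par_pos mu_pos _] /andP [/par_pos nu_pos _] eq_add.
  by rewrite -(add_colK k mu_pos) eq_add add_colK.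
move=> s; rewrite mem_filter mem_par_list; apply/idP/mapP.
  case/and3P => /eqP size_drop parNs /eqP size_s.
  exists (drop_col s); last by rewrite -size_s (drop_colK parNs).
  rewrite mem_par_list size_drop eqxx andbT; apply/and3P; split.
  - exact: sorted_drop_col (par_sorted parNs).
  - exact: drop_col_pos.
  - by have := sumn_drop_col (par_pos parNs); rewrite (par_sumn parNs) size_s; lia.
case=> mu; rewrite mem_par_list => /andP [parMmu /eqP size_mu] ->.
have le_mu_k : size mu <= k by rewrite size_mu.
rewrite add_colK ?(par_pos parMmu) // size_mu eqxx size_add_col // eqxx andbT.
by have := add_col_par parMmu le_mu_k; rewrite subnK.
Qed.

Local Open Scope ring_scope.

Section ParListSums.
Variable V : nmodType.

Lemma big_par_tuple N k (G : seq nat -> V) :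
  \sum_(a : k.-tuple 'I_N.+1 | is_par N (map val a)) G (map val a)
  = \sum_(s <- par_list N k) G s.
Proof. by rewrite /par_list big_filter big_map. Qed.

Lemma big_par_list_drop_col N k (G : seq nat -> V) : (k <= N)%N ->
  \sum_(s <- par_list N k) G s
  = \sum_(j < k.+1) \sum_(mu <- par_list (N - k) j) G (add_col k mu).
Proof.
move=> le_kN.
transitivity (\sum_(s <- par_list N k) \sum_(j < k.+1)
  if size (drop_col s) == j then G s else 0).
  apply: eq_big_seq => s; rewrite mem_par_list => /andP [_ /eqP size_s].
  have lt_drop_k : (size (drop_col s) < k.+1)%N.
    by rewrite ltnS -size_s size_drop_col count_size.
  by rewrite -big_mkcond (big_pred1 (Ordinal lt_drop_k)).
rewrite exchange_big; apply: eq_bigr => j _.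
rewrite -big_mkcond -big_filter -(big_map (add_col k) xpredT); apply: perm_big.
by apply: perm_par_list_drop_col; rewrite // -ltnS.
Qed.

End ParListSums.

Lemma exprz_nat (R : unitRingType) (x : R) n : x ^ n%:Z = x ^+ n.
Proof. by []. Qed.

Lemma big_distr4 (R : pzSemiRingType) (I1 I2 I3 I4 : finType) (P1 : pred I1) (P2 : pred I2)
    (P3 : pred I3) (P4 : pred I4) (f1 : I1 -> R) (f2 : I2 -> R) (f3 : I3 -> R)
    (f4 : I4 -> R) (K : R) :
  \sum_(i1 | P1 i1) \sum_(i2 | P2 i2) \sum_(i3 | P3 i3) \sum_(i4 | P4 i4)
    K * (f1 i1 * (f2 i2 * (f3 i3 * f4 i4)))
  = K * ((\sum_(i1 | P1 i1) f1 i1) * ((\sum_(i2 | P2 i2) f2 i2)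
      * ((\sum_(i3 | P3 i3) f3 i3) * (\sum_(i4 | P4 i4) f4 i4)))).
Proof.
rewrite mulr_suml mulr_sumr; apply: eq_bigr => i1 _.
rewrite mulr_suml mulr_sumr mulr_sumr; apply: eq_bigr => i2 _.
rewrite mulr_suml mulr_sumr mulr_sumr mulr_sumr; apply: eq_bigr => i3 _.
by rewrite !mulr_sumr; apply: eq_bigr => i4 _.
Qed.

Lemma expZ_nat n m c r s R S :
  (R <= n)%N -> (S <= m)%N -> (c <= n - R)%N -> (c <= m - S)%N ->
  expZ n m c r s R S = (r * (n - R - c) + s * (m - S - c))%N%:Z.
Proof.
move=> leRn leSm lecnR lecmS; rewrite /expZ PoszD !PoszM.
by congr (_ * _ + _ * _); lia.
Qed.

Lemma expW_split n m c r s R S a b l mu :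
  expW n m c r s R S a b l mu
  = ((r * (R - r))%N%:Z - (ptau a)%:Z) + (((s * (S - s))%N%:Z - (ptau b)%:Z)
    + (((c * (n - R - c))%N%:Z - (ptau l)%:Z) + ((c * (m - S - c))%N%:Z - (ptau mu)%:Z))).
Proof. by rewrite /expW !PoszD; ring. Qed.

(** * q-binomial identities *)

Section QBinomial.
Variables (F : fieldType) (q : F).

Lemma qint0 : qint q 0 = 0. Proof. by rewrite /qint big_ord0. Qed.

Lemma qintS n : qint q n.+1 = qint q n + q ^+ n.
Proof. by rewrite /qint big_ord_recr. Qed.

Lemma qintD a b : qint q (a + b) = qint q a + q ^+ a * qint q b.
Proof.
elim: b => [|b IH]; first by rewrite addn0 qint0 mulr0 addr0.
by rewrite addnS !qintS IH exprD; ring.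
Qed.

Lemma qint_geometric k : (1 - q) * qint q k = 1 - q ^+ k.
Proof.
elim: k => [|k IH]; first by rewrite qint0 mulr0 expr0 subrr.
by rewrite qintS mulrDr IH exprS; ring.
Qed.

Lemma qint_cross n m c : (c <= n)%N -> (c <= m)%N ->
  qint q (n + c) * qint q (m + c) - q ^+ (2 * c) * qint q (n - c) * qint q (m - c)
  = qint q (2 * c) * qint q (n + m).
Proof.
move=> /subnKC <- /subnKC <-; move: (n - c)%N (m - c)%N => x y.
have -> : (c + x + c = 2 * c + x)%N by lia.
have -> : (c + y + c = 2 * c + y)%N by lia.
have -> : (c + x + (c + y) = 2 * c + (x + y))%N by lia.
rewrite !addKn !(qintD (2 * c)) (qintD x y).
have ex : q ^+ x = 1 - (1 - q) * qint q x by rewrite qint_geometric; ring.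
have e2c : q ^+ (2 * c) = 1 - (1 - q) * qint q (2 * c) by rewrite qint_geometric; ring.
by rewrite ex e2c; ring.
Qed.

Lemma qfact0 : qfact q 0 = 1. Proof. by rewrite /qfact big_ord0. Qed.

Lemma qfactS n : qfact q n.+1 = qfact q n * qint q n.+1.
Proof. by rewrite /qfact big_ord_recr. Qed.

Lemma qbinom_small n k : (n < k)%N -> qbinom q n k = 0.
Proof. by move=> ltnk; rewrite /qbinom leqNgt ltnk. Qed.

Lemma qbinomE n k : (k <= n)%N ->
  qbinom q n k = qfact q n / (qfact q k * qfact q (n - k)).
Proof. by move=> lekn; rewrite /qbinom lekn. Qed.

Lemma qbinom_m1_n0 N : qbinom_m1 q N 0 = (N == 0)%:R.
Proof. by case: N. Qed.

Lemma qbinom_m1_0n k : qbinom_m1 q 0 k = (k == 0)%:R.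
Proof. by case: k. Qed.

Lemma qbinom_m1S N k : qbinom_m1 q N.+1 k.+1 = qbinom q N k.
Proof. by rewrite /qbinom_m1 /= !subn1. Qed.

(* [2N choose N-k]_q, vanishing for k > N rather than truncating N - k to 0 *)
Definition qbinom_center N k := if (k <= N)%N then qbinom q (2 * N) (N - k) else 0.

Lemma qbinomZ_subn n R c :
  (R <= n)%N -> qbinomZ q (n%:Z - R%:Z) c%:Z = qbinom q (n - R) c.
Proof. by move=> leRn; rewrite subzn. Qed.

Lemma qbinomZ_center N c : qbinomZ q (2 * N)%N (N%:Z - c%:Z) = qbinom_center N c.
Proof.
rewrite /qbinom_center; case: leqP => [lecN | ltNc]; first by rewrite subzn.
by rewrite (_ : N%:Z - c%:Z = Negz (c - N.+1)) // NegzE; lia.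
Qed.

Lemma prod_qfact_pmult_widen s M : (sumn s <= M)%N ->
  \prod_(1 <= i < M.+1) qfact q (pmult s i)
  = \prod_(1 <= i < (sumn s).+1) qfact q (pmult s i).
Proof.
move=> le_s_M; rewrite (@big_cat_nat _ _ _ (sumn s).+1 1 M.+1) //=.
rewrite [X in _ * X]big1_seq ?mulr1 // => i /andP [_].
by rewrite mem_index_iota => /andP [lt_s_i _]; rewrite pmult_sumn // qfact0.
Qed.

Hypothesis qintS_neq0 : forall n, qint q n.+1 != 0.

Lemma qfact_neq0 n : qfact q n != 0.
Proof.
elim: n => [|n IH]; first by rewrite qfact0 oner_neq0.
by rewrite qfactS mulf_neq0.
Qed.

Lemma qbinom_n0 n : qbinom q n 0 = 1.
Proof. by rewrite qbinomE // qfact0 subn0 mul1r divff // qfact_neq0. Qed.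

Lemma qbinom_nn n : qbinom q n n = 1.
Proof. by rewrite qbinomE // subnn qfact0 mulr1 divff // qfact_neq0. Qed.

Lemma qbinom_sub n k : (k <= n)%N -> qbinom q n (n - k) = qbinom q n k.
Proof.
by move=> lekn; rewrite !qbinomE ?leq_subr // subKn // (mulrC (qfact q k)).
Qed.

Lemma qbinomS n k :
  qbinom q n.+1 k.+1 = qbinom q n k + q ^+ k.+1 * qbinom q n k.+1.
Proof.
case: (ltngtP n k) => [ltnk | ltkn | ->].
- by rewrite !qbinom_small ?mulr0 ?addr0 // ltnW.
- have [d ->] : exists d, n = (k.+1 + d)%N by exists (n - k.+1)%N; rewrite subnKC.
  rewrite !qbinomE; try lia.
  have -> : ((k.+1 + d).+1 - k.+1 = d.+1)%N by lia.
  have -> : (k.+1 + d - k = d.+1)%N by lia.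
  rewrite addKn !qfactS -addnS qintD.
  by field; rewrite ?qfact_neq0 ?qintS_neq0.
- by rewrite !qbinom_nn qbinom_small ?mulr0 ?addr0.
Qed.

Lemma qmul_binom_diag n k :
  qint q n * qbinom q n.-1 k = qint q k.+1 * qbinom q n k.+1.
Proof.
case: n => [|n] /=; first by rewrite qint0 mul0r qbinom_small ?mulr0.
have [ltnk | leqkn] := ltnP n k; first by rewrite !qbinom_small ?mulr0.
rewrite !qbinomE // subSS !qfactS.
by field; rewrite ?qfact_neq0 ?qintS_neq0.
Qed.

Lemma qmul_binom_left n k :
  qint q (n - k) * qbinom q n k = qint q k.+1 * qbinom q n k.+1.
Proof.
have [ltkn | lenk] := ltnP k n; last first.
  by rewrite (eqP lenk) qint0 mul0r qbinom_small ?mulr0 // ltnS.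
rewrite !qbinomE // 1?ltnW //.
have -> : (n - k = (n - k.+1).+1)%N by lia.
rewrite !qfactS.
by field; rewrite ?qfact_neq0 ?qintS_neq0.
Qed.

Lemma qVandermonde a b K : qbinom q (a + b) K =
  \sum_(j < K.+1) q ^+ (j * (a - (K - j))) * qbinom q a (K - j) * qbinom q b j.
Proof.
elim: a K => [|a IH] K.
  rewrite add0n big_ord_recr /= subnn sub0n muln0 qbinom_n0 expr0 !mul1r.
  rewrite big1 ?add0r // => j _.
  by rewrite qbinom_small ?mulr0 ?mul0r // subn_gt0.
case: K => [|K]; first by rewrite big_ord1 /= !qbinom_n0 mul0n expr0 !mulr1.
rewrite addSn qbinomS !IH [in RHS]big_ord_recr [X in _ + _ * X]big_ord_recr /=.
rewrite mulrDr mulr_sumr addrA -big_split /=; congr (_ + _); last first.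
  by rewrite !subnn !qbinom_n0 subn0 mulnS exprD; ring.
apply: eq_bigr => j _.
have lejK : (j <= K)%N by rewrite -ltnS.
have -> : (K.+1 - j = (K - j).+1)%N by lia.
have -> : (a.+1 - (K - j).+1 = a - (K - j))%N by lia.
rewrite qbinomS mulrDr mulrDl; congr (_ + _).
have [ltaK | leKa] := ltnP a (K - j).+1.
  by rewrite (qbinom_small ltaK) !(mulr0, mul0r).
have -> : (a - (K - j) = (a - (K - j).+1).+1)%N by lia.
rewrite [q ^+ K.+1](_ : _ = q ^+ (j + (K - j).+1)); last by rewrite addnS subnKC.
by rewrite mulnS !exprD; ring.
Qed.

Lemma qbinom_upper_convolution a n b :
  \sum_(k < n) q ^+ (a.+1 * (n - k.+1 - b)) * qbinom q k a
    * qbinom q (n - k.+1) b = qbinom q n (a + b).+1.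
Proof.
elim: n b => [|n IH] b; first by rewrite big_ord0 qbinom_small.
rewrite big_ord_recr /= subnn.
case: b => [|b].
  have IH0 := IH 0%N; rewrite addn0 in IH0.
  rewrite addn0 qbinomS -IH0 mulr_sumr !qbinom_n0 sub0n muln0 expr0 !mulr1 mul1r.
  rewrite addrC; congr (_ + _); apply: eq_bigr => k _; rewrite !qbinom_n0 !mulr1 !subn0.
  have -> : (n.+1 - k.+1 = (n - k.+1).+1)%N by have := ltn_ord k; lia.
  by rewrite mulnS exprD mulrA.
rewrite (qbinom_small (ltn0Sn b)) mulr0 addr0 addnS qbinomS -IH -addnS -IH.
rewrite mulr_sumr -big_split /=; apply: eq_bigr => k _.
have ltkn : (k < n)%N := ltn_ord k.
have -> : (n.+1 - k.+1 = (n - k.+1).+1)%N by lia.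
rewrite qbinomS mulrDr; congr (_ + _).
have [ltnb | lebn] := ltnP (n - k.+1) b.+1.
  by rewrite (qbinom_small ltnb) !(mulr0, mul0r).
have -> : ((n - k.+1).+1 - b.+1 = (n - k.+1 - b.+1).+1)%N by lia.
by rewrite -[(a + b.+1).+1]addSn mulnS !exprD; ring.
Qed.

Lemma qint_qbinom_m1 N k : qint q N * qbinom_m1 q N k = qint q k * qbinom q N k.
Proof.
case: N => [|N]; first by case: k => [|k]; rewrite !qint0 !mul0r // qbinom_small ?mulr0.
case: k => [|k]; first by rewrite qbinom_m1_n0 qint0 mulr0 mul0r.
by rewrite qbinom_m1S -qmul_binom_diag.
Qed.

Lemma sum_qbinom_m1 n r c :
  \sum_(R < n.+1) q ^+ (r * (n - R - c)) * qbinom_m1 q R r * qbinom q (n - R) c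
  = qbinom q n (r + c).
Proof.
rewrite big_ord_recl /= subn0 qbinom_m1_0n; case: r => [|a] /=.
  rewrite mul0n expr0 !mul1r big1 ?addr0 // => R _.
  by rewrite /bump /= add1n qbinom_m1_n0 mulr0 mul0r.
rewrite mulr0 mul0r add0r addSn -qbinom_upper_convolution.
by apply: eq_bigr => k _; rewrite /bump /= add1n qbinom_m1S.
Qed.

Lemma qbinom_m1_convolution N k : (k < N)%N ->
  \sum_(j < k.+2) q ^+ ((k.+1 - j) * (N - k.+1 - j)) * qbinom q k.+1 j
    * qbinom_m1 q (N - k.+1) j
  = qbinom_m1 q N k.+1.
Proof.
move=> ltkN; case E: (N - k.+1)%N => [|N'].
  rewrite big_ord_recl big1 => [|j _]; last by rewrite qbinom_m1_0n mulr0.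
  rewrite (_ : N = k.+1); last by lia.
  by rewrite subn0 muln0 expr0 qbinom_n0 qbinom_m1S qbinom_nn !mul1r addr0.
rewrite big_ord_recl /= qbinom_m1_n0 mulr0 add0r (_ : N = (N' + k.+1).+1); last by lia.
rewrite qbinom_m1S qVandermonde [RHS](reindex_inj rev_ord_inj) /=.
apply: eq_bigr => i _; have le_ik : (i <= k)%N by rewrite -ltnS.
rewrite qbinom_m1S /bump /= add1n !subSS subKn // -(@qbinom_sub k.+1 (k - i)); last by lia.
by rewrite (_ : k.+1 - (k - i) = i.+1)%N; [ring | lia].
Qed.

Lemma sum_qbinom_shift n c :
  \sum_(r < n.+1) q ^+ (r * (c + r)) * qbinom q n r * qbinom q n (r + c)
  = qbinom_center n c.
Proof.
rewrite /qbinom_center; case: leqP => [lecn | ltnc]; last first.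
  by rewrite big1 // => r _; rewrite (qbinom_small (_ : n < r + c)%N) ?mulr0 //; lia.
rewrite mul2n -addnn qVandermonde.
have lt_nc_n : ((n - c).+1 <= n.+1)%N by rewrite ltnS leq_subr.
rewrite (big_ord_widen n.+1 (fun j => q ^+ (j * (n - (n - c - j)))
  * qbinom q n (n - c - j) * qbinom q n j) lt_nc_n) [RHS]big_mkcond /=.
apply: eq_bigr => r _; case: ifP => ler.
  have -> : (n - (n - c - r) = c + r)%N by lia.
  by rewrite -subnDA (addnC c r) qbinom_sub; [ring | lia].
by rewrite (qbinom_small (_ : n < r + c)%N) ?mulr0 //; lia.
Qed.

Lemma qbinom_centerS N k :
  qbinom_center N k.+1 * qint q (N + k.+1) = qbinom_center N k * qint q (N - k).
Proof.
rewrite /qbinom_center; case: (ltngtP k N) => [ltkN | ltNk | ->].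
- rewrite mulrC (_ : (N + k.+1 = 2 * N - (N - k.+1))%N); last by lia.
  by rewrite qmul_binom_left (_ : ((N - k.+1).+1 = N - k)%N) 1?mulrC //; lia.
- by rewrite !mul0r.
- by rewrite subnn qint0 !mulr0 mul0r.
Qed.

(* Summand c is B c - B c.+1, where B c is this summand with [2c]_q replaced by
   [n+c]_q [m+c]_q / [n+m]_q. *)
Lemma qcatalan_telescope n m :
  qint q (n + m) * \sum_(c < n.+1)
    q ^+ (c * (c - 1)) * qint q (2 * c) * qbinom_center n c * qbinom_center m c
  = qint q n * qint q m * qbinom q (2 * n) n * qbinom q (2 * m) m.
Proof.
pose B k := q ^+ (k * (k - 1)) * qint q (n + k) * qint q (m + k)
  * qbinom_center n k * qbinom_center m k.
have step c : qint q (n + m) * (q ^+ (c * (c - 1)) * qint q (2 * c)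
    * qbinom_center n c * qbinom_center m c) = B c - B c.+1.
  rewrite /B (_ : c.+1 * (c.+1 - 1) = c * (c - 1) + 2 * c)%N; last first.
    by case: c => [|c] //; rewrite !subn1 /=; nia.
  rewrite exprD; set Q := q ^+ (c * (c - 1)).
  transitivity (Q * qbinom_center n c * qbinom_center m c * (qint q (n + c) * qint q (m + c)
     - q ^+ (2 * c) * qint q (n - c) * qint q (m - c))).
    have [lecn | ltnc] := leqP c n; last first.
      by rewrite /qbinom_center leqNgt ltnc !(mulr0, mul0r).
    have [lecm | ltmc] := leqP c m; last first.
      by rewrite /qbinom_center (leqNgt c m) ltmc !(mulr0, mul0r).
    by rewrite qint_cross //; ring.
  transitivity (Q * qint q (n + c) * qint q (m + c) * qbinom_center n c * qbinom_center m c
    - Q * q ^+ (2 * c) * (qbinom_center n c.+1 * qint q (n + c.+1))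
      * (qbinom_center m c.+1 * qint q (m + c.+1))); last by ring.
  by rewrite !qbinom_centerS; ring.
rewrite mulr_sumr; under eq_bigr => c _ do rewrite step -opprB.
rewrite sumrN -(big_mkord xpredT (fun c => B c.+1 - B c)) telescope_sumr // opprB.
by rewrite /B /qbinom_center ltnn !leq0n !(mulr0, mul0r) subr0 !subn0 !addn0 mul0n expr0 mul1r.
Qed.

Lemma qmultinom_add_col M k mu : is_par M mu -> (size mu <= k)%N -> (0 < k)%N ->
  qmultinom q k (add_col k mu) = qbinom q k (size mu) * qmultinom q (size mu) mu.
Proof.
move=> parMmu le_mu_k k_gt0.
have par_add := add_col_par parMmu le_mu_k.
have drop_add : drop_col (add_col k mu) = mu by rewrite add_colK ?(par_pos parMmu).
rewrite /qmultinom (par_sumn par_add) big_ltn ?ltnS ?addn_gt0 ?k_gt0 ?orbT //.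
rewrite pmult1 ?(par_pos par_add) // drop_add size_add_col // big_add1 /=.
have -> : (M + k = (M + k.-1).+1)%N by lia.
rewrite -(par_sumn parMmu) -(@prod_qfact_pmult_widen mu (sumn mu + k.-1)) ?leq_addr //.
rewrite (@eq_big_nat _ _ _ _ _ _ (fun i => qfact q (pmult mu i))); last first.
  by move=> i /andP [i_gt0 _]; rewrite pmultS // drop_add.
set P := \prod_(_ <= _ < _) _.
have P_neq0 : P != 0 by rewrite prodf_seq_neq0; apply/allP => i _; apply: qfact_neq0.
by rewrite qbinomE //; field; rewrite P_neq0 !qfact_neq0.
Qed.

(** * The four summations *)

Hypothesis q_neq0 : q != 0.

Definition par_weight N k s := q ^ ((k * (N - k))%N%:Z - (ptau s)%:Z) * qmultinom q k s.

Lemma par_weight_add_col N k mu :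
  is_par (N - k) mu -> (size mu <= k)%N -> (0 < k)%N -> (k <= N)%N ->
  par_weight N k (add_col k mu) = q ^+ ((k - size mu) * (N - k - size mu))
    * qbinom q k (size mu) * par_weight (N - k) (size mu) mu.
Proof.
move=> parmu le_mu_k k_gt0 le_kN.
have le_mu_Nk := par_size_leq parmu.
have par_add : is_par N (add_col k mu) by have := add_col_par parmu le_mu_k; rewrite subnK.
rewrite /par_weight (qmultinom_add_col parmu) //.
rewrite (ptau_drop_col (par_pos par_add)) ?(par_sumn par_add) ?(leq_trans k_gt0) //.
rewrite add_colK ?(par_pos parmu) // size_add_col //; set j := size mu.
have -> : (k * (N - k))%N%:Z - (k * j + ptau mu)%N%:Z
    = ((k - j) * (N - k - j))%N%:Z + ((j * (N - k - j))%N%:Z - (ptau mu)%:Z).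
  have -> : (k * (N - k) = (k - j) * (N - k - j) + j * (N - k - j) + k * j)%N.
    by nia.
  by rewrite !PoszD; ring.
by rewrite expfzDr // exprz_nat; ring.
Qed.

Lemma sum_par_weight N k :
  \sum_(s <- par_list N k) par_weight N k s = qbinom_m1 q N k.
Proof.
elim/ltn_ind: N k => N IH k.
have [ltNk | lekN] := ltnP N k.
  rewrite big_seq big1 => [|s]; last first.
    by rewrite mem_par_list => /andP [/par_size_leq + /eqP size_s]; rewrite size_s leqNgt ltNk.
  case: N ltNk {IH} => [|N] ltNk; first by rewrite qbinom_m1_0n; case: k ltNk.
  by case: k ltNk => // k ltNk; rewrite qbinom_m1S qbinom_small.
case: k lekN => [|k] lekN.
  rewrite (perm_big _ (par_list0 N)) qbinom_m1_n0.
  case: N {IH lekN} => [|N] /=; last by rewrite big_nil.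
  by rewrite big_seq1 /par_weight /qmultinom /ptau !big_geq //= qfact0 divr1 mul1r.
rewrite big_par_list_drop_col // -qbinom_m1_convolution //.
apply: eq_bigr => j _; rewrite -IH ?mulr_sumr; last by lia.
apply: eq_big_seq => mu; rewrite mem_par_list => /andP [parmu /eqP size_mu].
by rewrite par_weight_add_col // size_mu // -ltnS.
Qed.

Lemma KreSum_Nara1 n m c r s R S : (R <= n)%N -> (S <= m)%N ->
  KreSum q n m c r s R S = Nara1 q n m c r s R S.
Proof.
move=> leRn leSm.
pose K := q ^ (expX c + expY c r s + expZ n m c r s R S)
  * (qint q (n * m) / (qint q n * qint q m)) * (qint q (2 * c) / 2)
  * (qint q (n - R) * qint q (m - S) / qint q c ^+ 2) * qbinom q n r * qbinom q m s.
transitivity (\sum_(a : r.-tuple 'I_R.+1 | is_par R (map val a))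
  \sum_(b : s.-tuple 'I_S.+1 | is_par S (map val b))
  \sum_(l : c.-tuple 'I_(n - R).+1 | is_par (n - R) (map val l))
  \sum_(mu : c.-tuple 'I_(m - S).+1 | is_par (m - S) (map val mu))
   K * (par_weight R r (map val a) * (par_weight S s (map val b)
     * (par_weight (n - R) c (map val l) * par_weight (m - S) c (map val mu))))).
  do 4![apply: eq_bigr => ? _].
  by rewrite /Kre /K /par_weight expW_split !expfzDr //; ring.
rewrite big_distr4 !big_par_tuple !sum_par_weight /K /Nara1 !qbinomZ_subn //; clear K.
case: c => [|c]; first by rewrite muln0 qint0 !(mulr0, mul0r).
rewrite -[qbinom q (n - R) c.+1](mulKf (qintS_neq0 c)) -qint_qbinom_m1.
rewrite -[qbinom q (m - S) c.+1](mulKf (qintS_neq0 c)) -qint_qbinom_m1.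
set C := qint q (n * m) / _; set D := qint q (2 * c.+1) / 2.
by field; rewrite qintS_neq0.
Qed.

Lemma sum_Nara1 n m c r s :
  \sum_(R < n.+1) \sum_(S < m.+1) Nara1 q n m c r s R S = Nara2 q n m c r s.
Proof.
pose K := q ^+ (c * (c - 1)) * q ^+ (r * (c + r) + s * (c + s))
  * (qint q (n * m) / (qint q n * qint q m)) * (qint q (2 * c) / 2)
  * qbinom q n r * qbinom q m s.
transitivity (K *
  ((\sum_(R < n.+1) q ^+ (r * (n - R - c)) * qbinom_m1 q R r * qbinom q (n - R) c)
  * (\sum_(S < m.+1) q ^+ (s * (m - S - c)) * qbinom_m1 q S s * qbinom q (m - S) c))).
  rewrite big_distrlr /= mulr_sumr; apply: eq_bigr => R _; rewrite mulr_sumr.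
  apply: eq_bigr => S _; rewrite /Nara1 !qbinomZ_subn -1?ltnS //.
  have [lecnR | ltnRc] := leqP c (n - R); last by rewrite (qbinom_small ltnRc) !(mulr0, mul0r).
  have [lecmS | ltmSc] := leqP c (m - S); last by rewrite (qbinom_small ltmSc) !(mulr0, mul0r).
  by rewrite expZ_nat -1?ltnS // /K /expX /expY -!PoszD exprz_nat !exprD; ring.
by rewrite !sum_qbinom_m1 /Nara2 /K /expX /expY -PoszD exprz_nat !exprD; ring.
Qed.

Lemma sum_Nara2 n m c :
  \sum_(r < n.+1) \sum_(s < m.+1) Nara2 q n m c r s = Nara3 q n m c.
Proof.
pose K := q ^+ (c * (c - 1)) * (qint q (n * m) / (qint q n * qint q m))
  * (qint q (2 * c) / 2).
transitivity (K *
  ((\sum_(r < n.+1) q ^+ (r * (c + r)) * qbinom q n r * qbinom q n (r + c))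
  * (\sum_(s < m.+1) q ^+ (s * (c + s)) * qbinom q m s * qbinom q m (s + c)))).
  rewrite big_distrlr /= mulr_sumr; apply: eq_bigr => r _; rewrite mulr_sumr.
  apply: eq_bigr => s _.
  by rewrite /Nara2 /expX /expY -PoszD exprz_nat !exprD /K; ring.
by rewrite !sum_qbinom_shift /Nara3 !qbinomZ_center /K /expX exprz_nat; ring.
Qed.

Hypothesis two_neq0 : (2 : F) != 0.

Lemma sum_Nara3 n m : \sum_(c < n.+1) Nara3 q n m c = Catq q n m.
Proof.
case: n => [|n].
  by rewrite /Catq mul0n qint0 !mul0r big1 // => c _; rewrite /Nara3 mul0n qint0 !(mul0r, mulr0).
case: m => [|m].
  by rewrite /Catq muln0 qint0 !mul0r big1 // => c _; rewrite /Nara3 muln0 qint0 !(mul0r, mulr0).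
have telescope := qcatalan_telescope n.+1 m.+1.
transitivity (qint q (n.+1 * m.+1) / (qint q n.+1 * qint q m.+1) / 2
  * \sum_(c < n.+2) q ^+ (c * (c - 1)) * qint q (2 * c)
      * qbinom_center n.+1 c * qbinom_center m.+1 c).
  rewrite mulr_sumr; apply: eq_bigr => c _.
  by rewrite /Nara3 !qbinomZ_center /expX exprz_nat; ring.
rewrite -[\sum_(_ < _) _](mulKf (qintS_neq0 (n + m.+1))) -addSn telescope /Catq addnC.
by field; rewrite !qintS_neq0 two_neq0.
Qed.

End QBinomial.

Lemma qX_neq0 : qX != 0.
Proof. by rewrite /qX tofrac_eq0 polyX_eq0. Qed.

(* [n+1]_q evaluates to n+1 at q = 1. *)
Lemma qint_qX_neq0 n : qint qX n.+1 != 0.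
Proof.
have -> : qint qX n.+1 = tofrac (\sum_(i < n.+1) ('X : {poly rat}) ^+ i).
  by rewrite rmorph_sum; apply: eq_bigr => i _; rewrite rmorphXn.
rewrite tofrac_eq0; apply/negP => /eqP /(congr1 (horner^~ 1)).
rewrite horner_sum horner0 /=.
under eq_bigr => i _ do rewrite hornerXn expr1n.
by rewrite sumr_const card_ord => /eqP; rewrite pnatr_eq0.
Qed.

Lemma two_neq0_Qq : (2 : Qq) != 0.
Proof.
have -> : (2 : Qq) = tofrac (2 : {poly rat}) by rewrite rmorph_nat.
by rewrite tofrac_eq0 -polyC_natr polyC_eq0 pnatr_eq0.
Qed.

Theorem theorem3p6 :
  (forall n m c r s R S : nat,
      (R <= n)%N -> (S <= m)%N ->
      KreSum qX n m c r s R S = Nara1 qX n m c r s R S) /\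
  (forall n m c r s : nat,
      \sum_(R < n.+1) \sum_(S < m.+1) Nara1 qX n m c r s R S
      = Nara2 qX n m c r s) /\
  (forall n m c : nat,
      \sum_(r < n.+1) \sum_(s < m.+1) Nara2 qX n m c r s = Nara3 qX n m c) /\
  (forall n m : nat,
      \sum_(c < n.+1) Nara3 qX n m c = Catq qX n m).
Proof.
split; first by move=> *; apply: KreSum_Nara1; [exact: qint_qX_neq0 | exact: qX_neq0 | ..].
split; first exact: sum_Nara1 qint_qX_neq0.
split; first exact: sum_Nara2 qint_qX_neq0.
exact: sum_Nara3 qint_qX_neq0 two_neq0_Qq.
Qed.
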